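(* Let $\bm{T} = \{T^1,\ldots,T^M\}$ be an ensemble of $M$ decision trees over an input space $\mathcal{X}$, with $L^m$ the set of leaves of tree $T^m$ and $\nu^m_j$ the value of leaf $l^m_j$, and let $\mathcal{C}:\mathcal{X}\to\{\mathrm{true},\mathrm{false}\}$ be a constraint such that $\mathcal{C}(\bm{x})$ holds for at least one $\bm{x}\in\mathcal{X}$. Consider the search space $S$ whose initial state is $[\,]$ and in which a state $s=[l^1_{i_1},\ldots,l^m_{i_m}]$ at depth $m<M$ has children $$C(s) = \{[l^1_{i_1},\ldots,l^m_{i_m}, l^{m+1}] \mid l^{m+1} \in L^{m+1},\ \mathrm{box}(l^1_{i_1},\ldots,l^m_{i_m},l^{m+1}) \neq \emptyset\},$$ and where only states $s$ accepted by $\mathcal{C}_s$ are retained, with $\mathcal{C}_s(s)=\mathrm{true}$ iff there exists $\bm{x}\in\mathrm{box}(s)$ with $\mathcal{C}(\bm{x})$. For $s=[l^1_{i_1},\ldots,l^m_{i_m}]$ define $$g(s)=\sum_{m'=1}^m \nu^{m'}_{i_{m'}},\qquad h(s)=\sum_{m'=m+1}^M h_{m'}(s),\qquad h_{m'}(s)=\max\{\nu^{m'}_j \mid l^{m'}_j\in L^{m'},\ \mathrm{box}(l^1_{i_1},\ldots,l^m_{i_m},l^{m'}_j)\neq\emptyset\},$$ and $f(s)=g(s)+h(s)$. Run best-first (A* ) search: maintain an OPEN list initialized to $\{[\,]\}$; repeatedly remove a state of maximal $f$-value from OPEN; if it has depth $M$, return it; otherwise add all its children in $C(s)$ that are accepted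 by $\mathcal{C}_s$ to OPEN. Then the search returns a state $s^*$ at depth $M$ which is an output configuration (a max-clique in $\bm{G}$) with $g(s^* ) = \max_{\bm{x}\in\mathcal{X},\ \mathcal{C}(\bm{x})} \bm{T}(\bm{x})$, i.e. it solves the optimization problem $\max_{\bm{x}\in\mathcal{X}} \bm{T}(\bm{x})$ subject to $\mathcal{C}(\bm{x})$.
   Context: Each tree $T^m$ is a binary tree whose internal nodes carry axis-aligned split conditions on the features of an input $\bm{x}\in\mathcal{X}$, and whose leaves carry real values. An input is evaluated by a tree by following split conditions from the root to a unique leaf; the ensemble output $\bm{T}(\bm{x})$ is the sum over trees of the values of the leaves reached by $\bm{x}$. For a leaf $l$, $\mathrm{box}(l)\subseteq\mathcal{X}$ is the set of inputs reaching $l$ (an axis-aligned box); for a collection of leaves (or a search state, viewed as its set of leaves), $\mathrm{box}$ is the intersection of the individual boxes, and $\mathrm{box}([\,])=\mathcal{X}$. An output configuration is a set of $M$ leaves, one per tree, whose boxes have nonempty common intersection. The graph $\bm{G}$ has all leaves as vertices with an edge between leaves of different trees whose boxes intersect; output configurations are exactly the max-cliques of $\bm{G}$ containing one leaf of each tree. For a state at depth $M$, $h=0$. *)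

From mathcomp Require Import all_boot all_order all_algebra.
From mathcomp Require Import boolp reals.
Set Implicit Arguments. Unset Strict Implicit. Unset Printing Implicit Defensive.
Import Order.TTheory GRing.Theory Num.Theory.
Local Open Scope ring_scope.

Section TreeEnsembles.
Variables (R : realType) (d : nat).

Definition input := 'I_d -> R.

(* A binary decision tree: internal nodes carry the axis-aligned split
   condition  x_i <= theta  (true -> left subtree, false -> right subtree),
   leaves carry real values. *)
Inductive dtree : Type :=
| DLeaf of R
| DNode of 'I_d & R & dtree & dtree.

(* A leaf is identified by its path from the root (false = left, true = right). *)
Definition leaf := seq bool.

Fixpoint leaves (t : dtree) : seq leaf :=
  match t with
  | DLeaf _ => [:: [::]]
  | DNode _ _ l r => map (cons false) (leaves l) ++ map (cons true) (leaves r)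
  end.

Fixpoint reach (t : dtree) (x : input) : leaf :=
  match t with
  | DLeaf _ => [::]
  | DNode i th l r => if x i <= th then false :: reach l x else true :: reach r x
  end.

Fixpoint leaf_val (t : dtree) (p : leaf) : R :=
  match t, p with
  | DLeaf v, _ => v
  | DNode _ _ l r, b :: p' => leaf_val (if b then r else l) p'
  | DNode _ _ _ _, [::] => 0
  end.

Definition box (t : dtree) (p : leaf) (x : input) : Prop := reach t x = p.

Definition tree_eval (t : dtree) (x : input) : R := leaf_val t (reach t x).

(* ---- Ensembles: E = [T^1; ...; T^M], M = size E (0-based indices). ---- *)
Definition tree_at (E : seq dtree) (m : nat) : dtree := nth (DLeaf 0) E m.

Definition ens_eval (E : seq dtree) (x : input) : R := \sum_(t <- E) tree_eval t x.

(* A search state [l^1; ...; l^m]: the i-th entry is a leaf of tree i. *)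
Definition state := seq leaf.

Definition in_box (E : seq dtree) (s : state) (x : input) : Prop :=
  forall i, (i < size s)%N -> box (tree_at E i) (nth [::] s i) x.

Definition box_nonempty (E : seq dtree) (s : state) : Prop := exists x, in_box E s x.

Definition output_config (E : seq dtree) (s : state) : Prop :=
  size s = size E /\
  (forall i, (i < size s)%N -> nth [::] s i \in leaves (tree_at E i)) /\
  box_nonempty E s.

Definition g (E : seq dtree) (s : state) : R :=
  \sum_(i < size s) leaf_val (tree_at E i) (nth [::] s i).

(* maximum of a list of reals (value on the empty list is irrelevant: it is
   never used on states of the search, whose boxes are nonempty). *)
Definition maxs (vs : seq R) : R :=
  match vs with [::] => 0 | v :: vs' => foldr Num.max v vs' end.

Definition h_tree (E : seq dtree) (s : state) (m' : nat) : R :=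
  maxs [seq leaf_val (tree_at E m') l | l <- leaves (tree_at E m') &
          `[< exists x, in_box E s x /\ box (tree_at E m') l x >] ].

Definition h (E : seq dtree) (s : state) : R :=
  \sum_(size s <= m' < size E) h_tree E s m'.

Definition f (E : seq dtree) (s : state) : R := g E s + h E s.

Definition children (E : seq dtree) (s : state) : seq state :=
  [seq rcons s l | l <- leaves (tree_at E (size s)) & `[< box_nonempty E (rcons s l) >] ].

Definition accepted (E : seq dtree) (C : input -> bool) (s : state) : Prop :=
  exists x, in_box E s x /\ C x.

Inductive config : Type :=
| Running of seq state   (* current OPEN list *)
| Done of state.

Inductive astar_step (E : seq dtree) (C : input -> bool) : config -> config -> Prop :=
| step_return (open : seq state) (s : state) :
    s \in open -> (forall s', s' \in open -> f E s' <= f E s) ->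
    size s = size E ->
    astar_step E C (Running open) (Done s)
| step_expand (open : seq state) (s : state) :
    s \in open -> (forall s', s' \in open -> f E s' <= f E s) ->
    (size s < size E)%N ->
    astar_step E C (Running open)
      (Running (rem s open ++ [seq c <- children E s | `[< accepted E C c >] ])).

(* Every execution (for every choice among states of maximal f) terminates,
   never gets stuck, and ends by returning a state satisfying P. *)
Inductive always_returns (E : seq dtree) (C : input -> bool) (P : state -> Prop)
  : config -> Prop :=
| ar_done (s : state) : P s -> always_returns E C P (Done s)
| ar_run (open : seq state) :
    (exists c, astar_step E C (Running open) c) ->
    (forall c, astar_step E C (Running open) c -> always_returns E C P c) ->
    always_returns E C P (Running open).

End TreeEnsembles.

(* The heuristic h is admissible: an input x in box(s) reaches, in every later
   tree m', a leaf whose box meets box(s), so T(x) <= g(s) + h(s) = f(s).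
   The OPEN list always covers every feasible x by a state whose box contains
   x, since expanding s replaces it by the child that follows x one tree
   further.  Hence when a state s of depth M (where f(s) = g(s)) has maximal
   f, g(s) bounds T(x) for every feasible x, with equality for the feasible
   x in box(s).  The search terminates because expanding a state of depth m
   trades a weight B^(M-m) for fewer than B states of weight B^(M-m-1), where
   B exceeds the number of leaves of every tree. *)
From mathcomp Require Import all_boot all_order all_algebra.
From mathcomp Require Import boolp reals.
Import Order.TTheory GRing.Theory Num.Theory.
Local Open Scope ring_scope.
Set Implicit Arguments. Unset Strict Implicit.

Lemma exists_argmax_seq (T : eqType) disp (U : orderType disp) (F : T -> U)
    (l : seq T) :
  l != [::] -> exists2 s, s \in l & forall s', s' \in l -> (F s' <= F s)%O.
Proof.
elim: l => [|a l IHl] // _.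
have [-> | /IHl[b bl bmax]] := eqVneq l [::].
  by exists a => [|s']; rewrite ?inE // => /eqP->.
have [Fab | Fba] := leP (F a) (F b).
  exists b; first by rewrite inE bl orbT.
  by move=> s' /[!inE] /orP[/eqP-> | /bmax].
exists a; first by rewrite inE eqxx.
by move=> s' /[!inE] /orP[/eqP-> // | /bmax/le_trans]; apply; apply: ltW.
Qed.

Lemma maxs_ge (R : realType) (vs : seq R) (v : R) : v \in vs -> v <= maxs vs.
Proof.
case: vs => [|v0 vs] //=.
elim: vs v => [|a vs IHvs] v /=; first by rewrite mem_seq1 => /eqP->.
rewrite !inE le_max => /or3P[/eqP-> | /eqP-> | vvs].
- by rewrite IHvs ?mem_head ?orbT.
- by rewrite lexx.
- by rewrite IHvs ?inE ?vvs ?orbT.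
Qed.

Lemma reach_leaves (R : realType) (d : nat) (t : dtree R d) (x : input R d) :
  reach t x \in leaves t.
Proof.
have cons_inj (b : bool) : injective (cons b : leaf -> leaf) by move=> ? ? [].
elim: t => [v | i th l IHl r IHr] /=; first by rewrite mem_seq1.
by case: ifP => _; rewrite mem_cat !(mem_map (cons_inj _)) ?IHl ?IHr ?orbT.
Qed.

Section BestFirstSearch.
Variables (R : realType) (d : nat) (E : seq (dtree R d)) (C : input R d -> bool).

Local Notation M := (size E).

Lemma in_box_rcons (s : state) (l : leaf) (x : input R d) :
  in_box E (rcons s l) x <-> in_box E s x /\ box (tree_at E (size s)) l x.
Proof.
split=> [hb | [hb hl] i].
  split=> [i lt_is | ].
    by have := hb i; rewrite size_rcons nth_rcons lt_is ltnS ltnW //; apply.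
  by have := hb (size s); rewrite size_rcons nth_rcons ltnn eqxx; apply.
rewrite size_rcons ltnS nth_rcons leq_eqVlt => /orP[/eqP-> | lt_is].
  by rewrite ltnn eqxx.
by rewrite lt_is; apply: hb.
Qed.

Lemma in_box_rcons_reach (s : state) (x : input R d) :
  in_box E s x -> in_box E (rcons s (reach (tree_at E (size s)) x)) x.
Proof. by move=> hb; apply/in_box_rcons. Qed.

Lemma ens_eval_split (s : state) (x : input R d) :
  (size s <= M)%N -> in_box E s x ->
  ens_eval E x = g E s + \sum_(size s <= m < M) tree_eval (tree_at E m) x.
Proof.
move=> le_sM hb.
rewrite /ens_eval (big_nth (@DLeaf R d 0)) (@big_cat_nat _ _ _ (size s)) //.
congr (_ + _); rewrite /g big_mkord; apply: eq_bigr => i _.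
by rewrite /tree_eval (hb i (ltn_ord i)).
Qed.

Lemma ens_eval_le_f (s : state) (x : input R d) :
  (size s <= M)%N -> in_box E s x -> ens_eval E x <= f E s.
Proof.
move=> le_sM hb; rewrite (ens_eval_split le_sM hb) /f lerD2l.
apply: ler_sum => m _; apply: maxs_ge; apply: map_f.
by rewrite mem_filter reach_leaves andbT; apply/asboolP; exists x.
Qed.

Lemma f_complete (s : state) : size s = M -> f E s = g E s.
Proof. by move=> sM; rewrite /f /h sM big_geq // addr0. Qed.

Definition accepted_children (s : state) : seq state :=
  [seq c <- children E s | `[< accepted E C c >]].

Definition expand (open : seq state) (s : state) : seq state :=
  rem s open ++ accepted_children s.

Lemma mem_accepted_children (s c : state) :
  c \in accepted_children s ->
  exists2 l, l \in leaves (tree_at E (size s)) & c = rcons s l /\ accepted E C c.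
Proof.
rewrite mem_filter => /andP[/asboolP acc /mapP[l]].
by rewrite mem_filter => /andP[_ hl] c_def; exists l.
Qed.

Lemma accepted_child_reach (s : state) (x : input R d) :
  in_box E s x -> C x ->
  rcons s (reach (tree_at E (size s)) x) \in accepted_children s.
Proof.
move=> /in_box_rcons_reach hb Cx; rewrite mem_filter; apply/andP; split.
  by apply/asboolP; exists x.
by apply: map_f; rewrite mem_filter reach_leaves andbT; apply/asboolP; exists x.
Qed.

Definition wf_state (s : state) : Prop :=
  [/\ (size s <= M)%N,
      forall i, (i < size s)%N -> nth [::] s i \in leaves (tree_at E i)
    & accepted E C s].

Definition covers (open : seq state) : Prop :=
  forall x, C x -> exists2 s, s \in open & in_box E s x.

Definition open_inv (open : seq state) : Prop :=
  {in open, forall s, wf_state s} /\ covers open.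

Lemma open_inv_init : (exists x, C x) -> open_inv [:: [::]].
Proof.
move=> [x Cx]; split=> [s /[!inE] /eqP-> | y _].
  by split=> //; exists x.
by exists [::]; rewrite ?mem_head.
Qed.

Lemma wf_expand (open : seq state) (s : state) :
  {in open, forall s, wf_state s} -> s \in open -> (size s < M)%N ->
  {in expand open s, forall c, wf_state c}.
Proof.
move=> wf_open s_open lt_sM c; rewrite mem_cat => /orP[/mem_rem/wf_open // | ].
move=> /mem_accepted_children[l hl [-> acc]].
have [_ s_leaves _] := wf_open s s_open.
split=> //; first by rewrite size_rcons.
move=> i; rewrite size_rcons ltnS nth_rcons leq_eqVlt => /orP[/eqP-> | lt_is].
  by rewrite ltnn eqxx.
by rewrite lt_is; apply: s_leaves.
Qed.

Lemma covers_expand (open : seq state) (s : state) :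
  covers open -> covers (expand open s).
Proof.
move=> cov x Cx; have [s' s'_open hb] := cov x Cx.
have [s's | ne] := eqVneq s' s; last by exists s' => //; rewrite mem_cat rem_mem.
rewrite {}s's in hb; exists (rcons s (reach (tree_at E (size s)) x)).
  by rewrite mem_cat accepted_child_reach ?orbT.
exact: in_box_rcons_reach.
Qed.

Lemma open_nonempty (open : seq state) :
  (exists x, C x) -> covers open -> open != [::].
Proof. by case=> x /[swap] /[apply] -[s]; case: open. Qed.

Definition optimal_output (s : state) : Prop :=
  size s = M /\ output_config E s /\
  (exists x, C x /\ ens_eval E x = g E s) /\
  (forall x, C x -> ens_eval E x <= g E s).

Lemma max_complete_state_optimal (open : seq state) (s : state) :
  open_inv open -> s \in open -> (forall s', s' \in open -> f E s' <= f E s) ->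
  size s = M -> optimal_output s.
Proof.
move=> [wf_open cov] s_open s_max sM.
have [_ s_leaves [x [hb Cx]]] := wf_open s s_open.
split=> //; split; first by split=> //; split=> //; exists x.
split.
  by exists x; split=> //; rewrite (ens_eval_split _ hb) sM ?big_geq ?addr0.
move=> y Cy; have [s' s'_open hb'] := cov y Cy.
have [le_s'M _ _] := wf_open s' s'_open.
rewrite -f_complete //.
exact: le_trans (ens_eval_le_f le_s'M hb') (s_max s' s'_open).
Qed.

Definition branching : nat := (\max_(i < M) size (leaves (tree_at E i))).+1.

Definition potential (open : seq state) : nat :=
  \sum_(s <- open) branching ^ (M - size s).

Lemma size_accepted_children_lt (s : state) : (size s < M)%N ->
  (size (accepted_children s) < branching)%N.
Proof.
move=> lt_sM; rewrite size_filter ltnS (leq_trans (count_size _ _)) //.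
rewrite size_map size_filter (leq_trans (count_size _ _)) //.
exact: (@leq_bigmax _ (fun i : 'I_M => size (leaves (tree_at E i))) (Ordinal lt_sM)).
Qed.

Lemma potential_expand_lt (open : seq state) (s : state) :
  s \in open -> (size s < M)%N -> (potential (expand open s) < potential open)%N.
Proof.
move=> s_open lt_sM.
rewrite {2}/potential (perm_big _ (perm_to_rem s_open)) big_cons.
rewrite /potential big_cat /= addnC ltn_add2r.
set w := (branching ^ (M - (size s).+1))%N.
have w_gt0 : (0 < w)%N by rewrite expn_gt0.
have child_weight c :
    c \in accepted_children s -> (branching ^ (M - size c) = w)%N.
  by case/mem_accepted_children=> l _ [-> _]; rewrite size_rcons.
rewrite (eq_big_seq (fun=> w)) // big_const_seq count_predT iter_addn_0.
by rewrite -subnSK // expnS -/w mulnC ltn_pmul2r // size_accepted_children_lt.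
Qed.

Lemma always_returns_optimal (open : seq state) :
  (exists x, C x) -> open_inv open ->
  always_returns E C optimal_output (Running open).
Proof.
move=> hC; have [n] := ubnP (potential open).
elim: n open => // n IHn open lt_pot inv_open.
have [wf_open cov] := inv_open.
apply: ar_run.
  have [s s_open s_max] := exists_argmax_seq (f E) (open_nonempty hC cov).
  have [le_sM _ _] := wf_open s s_open.
  have [sM | lt_sM] := eqVneq (size s) M.
    by exists (Done s); apply: step_return.
  by eexists; apply: (step_expand C s_open s_max); rewrite ltn_neqAle lt_sM.
move=> c st; inversion st as [o s s_open s_max sM | o s s_open s_max lt_sM]; subst.
  by apply/ar_done/(max_complete_state_optimal inv_open).
apply: IHn; first exact: leq_trans (potential_expand_lt s_open lt_sM) _.
by split; [apply: wf_expand | apply: covers_expand].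
Qed.

End BestFirstSearch.

Theorem theorem2 (R : realType) (d : nat) (E : seq (dtree R d))
    (C : input R d -> bool) (hC : exists x, C x) :
  always_returns E C
    (fun s => size s = size E /\ output_config E s /\
              (exists x, C x /\ ens_eval E x = g E s) /\
              (forall x, C x -> ens_eval E x <= g E s))
    (Running [:: [::]]).
Proof. exact: always_returns_optimal hC (open_inv_init E hC). Qed.
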